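(* Assume that $\{Z_i\}_{i\ge 0}$ is a stationary Markov chain on $(\mathsf{Z},\mathcal{Z})$ with Markov kernel $\mathrm{Q}$ and unique invariant distribution $\pi$, and that $\mathrm{Q}$ is uniformly geometrically ergodic with mixing time $\tau\in\mathbb{N}$, i.e. for every $k\in\mathbb{N}$, $$\sup_{z,z'\in\mathsf{Z}}\tfrac12\|\mathrm{Q}^k(z,\cdot)-\mathrm{Q}^k(z',\cdot)\|_{\mathsf{TV}}\le (1/4)^{\lfloor k/\tau\rfloor}.$$ Assume further that for all $x\in\mathbb{R}^d$, $\mathbb{E}_{\pi}[\nabla F(x,Z)]=\nabla f(x)$, and for all $z\in\mathsf{Z}$ and $x\in\mathbb{R}^d$, $$\|\nabla F(x,z)-\nabla f(x)\|^2\le \sigma^2+\delta^2\|\nabla f(x)\|^2 .$$ Then for any $n\ge 1$ and $x\in\mathbb{R}^d$, $$\mathbb{E}_{\pi}\Big[\Big\|\tfrac1n\sum_{i=1}^n\nabla F(x,Z_i)-\nabla f(x)\Big\|^2\Big]\le \frac{8\tau}{n}\big(\sigma^2+\delta^2\|\nabla f(x)\|^2\big),$$ and moreover, for any initial distribution $\xi$ on $(\mathsf{Z},\mathcal{Z})$, $$\mathbb{E}_{\xi}\Big[\Big\|\tfrac1n\sum_{i=1}^n\nabla F(x,Z_i)-\nabla f(x)\Big\|^2\Big]\le \frac{C_1\tau}{n}\big(\sigma^2+\delta^2\|\nabla f(x)\|^2\big),\qquad C_1=16\Big(1+\frac{1}{\ln^2 4}\Big).$$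
   Context: $(\mathsf{Z},\mathcal{Z})$ is a complete separable metric space with its Borel $\sigma$-field. $\mathbb{P}_\xi,\mathbb{E}_\xi$ denote the law and expectation of the Markov chain $(Z_i)$ with kernel $\mathrm{Q}$ started from the initial distribution $\xi$; $\mathbb{E}_\pi$ is the stationary case. $\|\cdot\|_{\mathsf{TV}}$ is the total variation norm of a signed measure. $f:\mathbb{R}^d\to\mathbb{R}$ is defined by $f(x)=\mathbb{E}_{Z\sim\pi}[F(x,Z)]$, where $F(\cdot,z)$ is differentiable for each $z$, and $\sigma\ge0,\delta\ge0$ are constants. *)

From HB Require Import structures.
From mathcomp Require Import all_boot all_order all_algebra.
From mathcomp Require Import all_classical all_reals all_analysis.
Set Implicit Arguments. Unset Strict Implicit. Unset Printing Implicit Defensive.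
Import Order.TTheory GRing.Theory Num.Theory.
Import numFieldNormedType.Exports.
Local Open Scope classical_set_scope.
Local Open Scope ring_scope.

Section MC.
Context {R : realType} {dT : measure_display} {T : measurableType dT}.

Definition dist_open (dist : T -> T -> R) (A : set T) : Prop :=
  forall x, A x -> exists2 e : R, 0 < e & forall y, dist x y < e -> A y.

Definition polish_borel (dist : T -> T -> R) : Prop :=
  [/\ (forall x y, dist x y = 0 <-> x = y) /\
      (forall x y, dist x y = dist y x),
      (forall x y z, dist x z <= dist x y + dist y z),
      (forall u : nat -> T,
          (forall e : R, 0 < e -> exists N, forall m n, (N <= m)%N -> (N <= n)%N ->
              dist (u m) (u n) < e) ->
          exists l, forall e : R, 0 < e -> exists N, forall n, (N <= n)%N -> dist (u n) l < e),
      (exists s : nat -> T, forall x (e : R), 0 < e -> exists k, dist x (s k) < e) &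
      (forall A : set T, measurable A <-> <<s dist_open dist >> A)].

Fixpoint kpow (Q : R.-pker T ~> T) (k : nat) (z : T) : set T -> \bar R :=
  match k with
  | 0%N => fun A => \d_z A
  | k'.+1 => fun A => (\int[Q z]_y kpow Q k' y A)%E
  end.

Definition tv_norm (mu nu : set T -> \bar R) : \bar R :=
  ereal_sup [set r | exists (n : nat) (A : nat -> set T),
     [/\ (forall i, measurable (A i)), trivIset `I_n A,
         \bigcup_(i in `I_n) A i = setT &
         r = (\sum_(i < n) `|mu (A i) - nu (A i)|)%E]].

Definition kinvariant (Q : R.-pker T ~> T) (pi : probability T R) : Prop :=
  forall A, measurable A -> (\int[pi]_z Q z A)%E = pi A.

(* E_xi [ g(Z_0, ..., Z_n) ] for the Markov chain with kernel Q and initial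
   distribution xi; g receives the path j |-> Z_j (only j <= n is relevant) *)
Fixpoint mexp (Q : R.-pker T ~> T) (n : nat) (g : (nat -> T) -> \bar R)
    (p : nat -> T) (k : nat) (z : T) : \bar R :=
  let p' := fun j => if j == k then z else p j in
  match n with
  | 0%N => g p'
  | m.+1 => (\int[Q z]_y mexp Q m g p' k.+1 y)%E
  end.

Definition chain_expect (Q : R.-pker T ~> T) (xi : probability T R) (n : nat)
    (g : (nat -> T) -> \bar R) : \bar R :=
  (\int[xi]_z mexp Q n g (fun _ => z) 0 z)%E.

End MC.

Section Grad.
Context {R : realType} {d : nat}.
Definition grad (g : 'rV[R]_d -> R) (x : 'rV[R]_d) : 'rV[R]_d :=
  \row_(i < d) derive g x (delta_mx 0 i).
Definition sqnorm (v : 'rV[R]_d) : R := \sum_(i < d) (v 0 i) ^+ 2.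
End Grad.

(* Put H := grad F(x, .) - grad f(x): a bounded function with pi(H) = 0 and
   |H|^2 <= B := sigma^2 + delta^2 |grad f(x)|^2.  Uniform mixing gives
   |P^k H(y)| <= 2 4^-(k/tau) sqrt B for every y: the squared norm
   |P^k H(y)|^2 is the value at y of P^k phi, where phi = <P^k H(y), H> is
   centred under the invariant law pi, and P^k phi oscillates by at most
   sup |phi| times the total variation distance between Q^k(y, .) and
   Q^k(y', .).  Expanding the square of sum_i H(Z_i) and conditioning on the
   earlier state, each cross term becomes <H(Z_i), P^(j-i) H(Z_i)>, which is
   at most 4 B 4^-((j-i)/tau); summed over j this is at most (8 tau - 1) B.
   Hence the bound 8 tau B / n holds for every initial distribution, and the
   second claim follows from 8 <= C_1.  The conditioning is carried out
   backwards along the path, with a quadratic potential in the running sum. *)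

From mathcomp Require Import all_boot all_order all_algebra.
From mathcomp Require Import all_classical all_reals all_analysis.
From mathcomp Require Import measurable_realfun ring lra zify.
Import Order.TTheory GRing.Theory Num.Theory.
Import numFieldNormedType.Exports.
Local Open Scope classical_set_scope.
Local Open Scope ring_scope.
Set Implicit Arguments. Unset Strict Implicit.

Section bounded_measurable.
Context {R : realType} {dT : measure_display} {T : measurableType dT}.
Implicit Types (f g : T -> R) (mu : {measure set T -> \bar R}).

(* Unlike [ge0_le_integral], no measurability is assumed: the iterated
   integrals [mexp] are not known to be measurable. *)
Lemma ge0_le_integralT mu (f g : T -> \bar R) :
  (forall x, 0 <= f x)%E -> (forall x, f x <= g x)%E ->
  (\int[mu]_x f x <= \int[mu]_x g x)%E.
Proof.
move=> f0 fg; have g0 x : (0 <= g x)%E by apply: le_trans (fg x).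
rewrite !ge0_integralTE//.
by apply: ereal_sup_le => _ [h hf <-]; exists h => //= x; exact: le_trans (fg x).
Qed.

Definition bounded_measurable f :=
  measurable_fun setT f /\ exists M, forall z, `|f z| <= M.

Lemma bounded_measurable_cst c : bounded_measurable (fun=> c).
Proof. by split; [exact: measurable_cst | exists `|c|]. Qed.

Lemma bounded_measurableD f g : bounded_measurable f -> bounded_measurable g ->
  bounded_measurable (fun z => f z + g z).
Proof.
move=> [mf [M hM]] [mg [N hN]]; split; first exact: measurable_funD.
by exists (M + N) => z; apply: le_trans (ler_normD _ _) _; exact: lerD.
Qed.

Lemma bounded_measurableZ c f : bounded_measurable f ->
  bounded_measurable (fun z => c * f z).
Proof.
move=> [mf [M hM]]; split; first exact: measurable_funM (measurable_cst _) mf.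
by exists (`|c| * M) => z; rewrite normrM ler_wpM2l.
Qed.

Lemma bounded_measurableB f g : bounded_measurable f -> bounded_measurable g ->
  bounded_measurable (fun z => f z - g z).
Proof.
move=> bf bg; have := bounded_measurableD bf (bounded_measurableZ (-1) bg).
by under eq_fun do rewrite mulN1r.
Qed.

Lemma bounded_measurable_sum (I : Type) (s : seq I) (F : I -> T -> R) :
  (forall i, bounded_measurable (F i)) ->
  bounded_measurable (fun z => \sum_(i <- s) F i z).
Proof.
move=> bF; elim: s => [|a s IH].
  by under eq_fun do rewrite big_nil; exact: bounded_measurable_cst.
by under eq_fun do rewrite big_cons; exact: bounded_measurableD.
Qed.

Lemma bounded_measurable_indic A : measurable A ->
  bounded_measurable (\1_A : T -> R).
Proof.
move=> mA; split; first exact: measurable_indic.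
by exists 1 => z; rewrite /indic; case: (_ \in _); rewrite ?normr0 ?normr1.
Qed.

Lemma bounded_measurable_sqr_le (f : T -> R) B : measurable_fun setT f ->
  (forall z, f z ^+ 2 <= B) -> bounded_measurable f.
Proof.
move=> mf fB; split=> //; exists (1 + B) => z.
have := fB z; rewrite -real_normK ?num_real// => fzB.
by have := normr_ge0 (f z); nra.
Qed.

Section probability_Rintegral.
Variable mu : {measure set T -> \bar R}.
Hypothesis mu1 : mu setT = 1%E.

Lemma bounded_measurable_integrable f : bounded_measurable f ->
  mu.-integrable setT (EFin \o f).
Proof.
move=> [mf [M hM]]; apply/integrableP; split; first exact/measurable_EFinP.
apply: (@le_lt_trans _ _ (\int[mu]_x (cst M%:E x))%E).
  by apply: ge0_le_integralT => x //=; rewrite lee_fin.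
by rewrite integral_cst// mu1 mule1 ltry.
Qed.

Lemma EFin_Rintegral f : bounded_measurable f ->
  (\int[mu]_z (f z)%:E)%E = (\int[mu]_z f z)%:E.
Proof.
move=> bf; rewrite /Rintegral fineK//.
exact/integrable_fin_num/bounded_measurable_integrable.
Qed.

Lemma Rintegral_cst1 c : \int[mu]_z c = c.
Proof. by rewrite Rintegral_cst// mu1 mulr1. Qed.

Lemma RintegralD_bounded f g : bounded_measurable f -> bounded_measurable g ->
  \int[mu]_z (f z + g z) = \int[mu]_z f z + \int[mu]_z g z.
Proof.
by move=> bf bg; apply: RintegralD; rewrite // bounded_measurable_integrable.
Qed.

Lemma RintegralZl_bounded c f : bounded_measurable f ->
  \int[mu]_z (c * f z) = c * \int[mu]_z f z.
Proof. by move=> bf; apply: RintegralZl; rewrite // bounded_measurable_integrable. Qed.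

Lemma RintegralB_bounded f g : bounded_measurable f -> bounded_measurable g ->
  \int[mu]_z (f z - g z) = \int[mu]_z f z - \int[mu]_z g z.
Proof.
by move=> bf bg; apply: RintegralB; rewrite // bounded_measurable_integrable.
Qed.

Lemma Rintegral_sum_bounded (I : Type) (s : seq I) (F : I -> T -> R) :
  (forall i, bounded_measurable (F i)) ->
  \int[mu]_z (\sum_(i <- s) F i z) = \sum_(i <- s) \int[mu]_z F i z.
Proof.
move=> bF; elim: s => [|a s IH].
  by under eq_Rintegral do rewrite big_nil; rewrite big_nil Rintegral_cst1.
under eq_Rintegral do rewrite big_cons.
by rewrite RintegralD_bounded ?IH ?big_cons//; exact: bounded_measurable_sum.
Qed.

Lemma le_Rintegral_bounded f g : bounded_measurable f -> bounded_measurable g ->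
  (forall z, f z <= g z) -> \int[mu]_z f z <= \int[mu]_z g z.
Proof.
by move=> bf bg fg; apply: le_Rintegral; rewrite // bounded_measurable_integrable.
Qed.

Lemma normr_Rintegral_le f M : bounded_measurable f ->
  (forall z, `|f z| <= M) -> `|\int[mu]_z f z| <= M.
Proof.
move=> bf hM; have bM := bounded_measurable_cst M.
have bNM := bounded_measurable_cst (- M).
have [hMl hMr] : (forall z, - M <= f z) /\ (forall z, f z <= M).
  by split=> z; have := hM z; rewrite ler_norml => /andP[].
rewrite ler_norml; apply/andP; split.
  by rewrite -{1}(Rintegral_cst1 (- M)) le_Rintegral_bounded.
by rewrite -[leRHS](Rintegral_cst1 M) le_Rintegral_bounded.
Qed.

Lemma Rintegral_indic A : measurable A -> \int[mu]_z \1_A z = fine (mu A).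
Proof. by move=> mA; rewrite /Rintegral integral_indic// setIT. Qed.

Lemma Rintegral_centered f c : bounded_measurable (fun z => f z - c) ->
  (\int[mu]_z (f z)%:E)%E = c%:E -> \int[mu]_z (f z - c) = 0.
Proof.
move=> bfc fc; have bc := bounded_measurable_cst c.
have bf : bounded_measurable f.
  by have := bounded_measurableD bfc bc; under eq_fun do rewrite subrK.
by rewrite RintegralB_bounded// Rintegral_cst1 {1}/Rintegral fc subrr.
Qed.

End probability_Rintegral.
End bounded_measurable.

Section step_function_approximation.
Context {R : realType} {dT : measure_display} {T : measurableType dT}.

Lemma step_function_approx (phi : T -> R) (M e : R) :
  measurable_fun setT phi -> (forall z, `|phi z| <= M) -> 0 < e ->
  exists N (A : nat -> set T) (c : nat -> R),
  [/\ (forall j, measurable (A j)), trivIset `I_N A, \bigcup_(j in `I_N) A j = setT,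
      (forall j, `|c j| <= M) &
      forall z, `|phi z - \sum_(j < N) c j * \1_(A j) z| <= e].
Proof.
move=> mphi hM e0.
have phiM z : - M <= phi z <= M by rewrite -ler_norml.
have M0 : 0 <= M by apply: le_trans (hM point).
pose A j := [set z | j%:R * e <= phi z + M < j.+1%:R * e].
pose c j := Num.min (j%:R * e - M) M.
pose idx z := Num.truncn ((phi z + M) / e).
have A_uniq i j z : A i z -> A j z -> i = j.
  rewrite /A /= => /andP[hi1 hi2] /andP[hj1 hj2].
  have : i%:R * e < j.+1%:R * e by apply: le_lt_trans hi1 hj2.
  have : j%:R * e < i.+1%:R * e by apply: le_lt_trans hj1 hi2.
  by rewrite !ltr_pM2r// !ltr_nat; lia.
have level_ge0 z : 0 <= (phi z + M) / e.
  by rewrite divr_ge0 ?(ltW e0)//; case/andP: (phiM z); lra.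
have A_idx z : A (idx z) z.
  have /truncn_itv := level_ge0 z.
  by rewrite /A /= -ler_pdivlMr// -ltr_pdivrMr.
have h2M : 0 <= 2 * M / e by rewrite divr_ge0 ?mulr_ge0 ?(ltW e0).
pose N := (Num.truncn (2 * M / e)).+1.
have idxN z : (idx z < N)%N.
  have /andP[_ hN] := truncn_itv h2M.
  rewrite -(ltr_nat R); apply: le_lt_trans hN.
  have /andP[h _] := truncn_itv (level_ge0 z).
  apply: le_trans h _; rewrite ler_wpM2r ?invr_ge0 ?(ltW e0)//.
  by case/andP: (phiM z) => _; lra.
exists N, A, c; split.
- move=> j; rewrite (_ : A j = phi @^-1` `[j%:R * e - M, j.+1%:R * e - M[%classic).
    by rewrite -[X in measurable X]setTI; apply: mphi => //; exact: measurable_itv.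
  by apply/seteqP; split => z /=; rewrite in_itv /= lerBlDr ltrBrDr.
- by move=> i j _ _ [z [hi hj]]; exact: A_uniq hi hj.
- by apply/seteqP; split => // z _; exists (idx z) => //=; exact: A_idx.
- move=> j; have : 0 <= j%:R * e by rewrite mulr_ge0 ?(ltW e0).
  by rewrite ler_norml le_min ge_min lexx orbT andbT => ?; apply/andP; split; lra.
- move=> z; rewrite (bigD1 (Ordinal (idxN z))) //= big1 => [|j hj]; last first.
    rewrite /indic (_ : (z \in A j) = false) ?mulr0//.
    apply/negbTE/negP; rewrite inE => /A_uniq/(_ (A_idx z)) hji.
    by move/eqP: hj; apply; exact: val_inj.
  rewrite /indic mem_set ?mulr1 ?addr0; last exact: A_idx.
  have /andP[h1 h2] := A_idx z; have /andP[h3 h4] := phiM z.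
  by rewrite /c min_l ?ler_norml; lra.
Qed.

End step_function_approximation.

Section markov_operator.
Context {R : realType} {dT : measure_display} {T : measurableType dT}.
Variable Q : R.-pker T ~> T.
Implicit Types (f g phi : T -> R).

Definition markov_op phi z := \int[Q z]_y phi y.

Definition markov_pow k := iter k markov_op.

Let Q1 z : Q z setT = 1%E. Proof. exact: prob_kernel. Qed.

Lemma normr_markov_op_le phi M : bounded_measurable phi ->
  (forall z, `|phi z| <= M) -> forall z, `|markov_op phi z| <= M.
Proof. by move=> bphi hM z; exact: normr_Rintegral_le. Qed.

Lemma bounded_measurable_markov_op phi : bounded_measurable phi ->
  bounded_measurable (markov_op phi).
Proof.
move=> bphi; have [mphi [M hM]] := bphi.
split; last by exists M; exact: normr_markov_op_le.
have bphiM : bounded_measurable (fun y => phi y + M).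
  exact/bounded_measurableD/bounded_measurable_cst.
have -> : markov_op phi = (fun z => markov_op (fun y => phi y + M) z - M).
  by apply/funext => z; rewrite /markov_op RintegralD_bounded ?Rintegral_cst1 ?addrK//;
    exact: bounded_measurable_cst.
apply: measurable_funB; last exact: measurable_cst.
apply: (measurableT_comp (fine_measurable measurableT)).
apply: (measurable_fun_integral_kernel (l := Q)); first exact: measurable_kernel.
- move=> y; rewrite lee_fin -lerBlDr sub0r.
  by have := hM y; rewrite ler_norml => /andP[].
- exact/measurable_EFinP/measurable_funD.
Qed.

Lemma markov_opD f g : bounded_measurable f -> bounded_measurable g ->
  markov_op (fun y => f y + g y) = (fun z => markov_op f z + markov_op g z).
Proof. by move=> bf bg; apply/funext => z; exact: RintegralD_bounded. Qed.

Lemma markov_opZ c f : bounded_measurable f ->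
  markov_op (fun y => c * f y) = (fun z => c * markov_op f z).
Proof. by move=> bf; apply/funext => z; exact: RintegralZl_bounded. Qed.

Lemma markov_op_sum (I : Type) (s : seq I) (F : I -> T -> R) :
  (forall i, bounded_measurable (F i)) ->
  markov_op (fun y => \sum_(i <- s) F i y) =
  (fun z => \sum_(i <- s) markov_op (F i) z).
Proof. by move=> bF; apply/funext => z; exact: Rintegral_sum_bounded. Qed.

Lemma bounded_measurable_markov_pow k phi : bounded_measurable phi ->
  bounded_measurable (markov_pow k phi).
Proof. by move=> bphi; elim: k => //= k IH; exact: bounded_measurable_markov_op. Qed.

Lemma normr_markov_pow_le k phi M : bounded_measurable phi ->
  (forall z, `|phi z| <= M) -> forall z, `|markov_pow k phi z| <= M.
Proof.
move=> bphi hM; elim: k => //= k IH.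
by apply: normr_markov_op_le => //; exact: bounded_measurable_markov_pow.
Qed.

Lemma markov_powD k f g : bounded_measurable f -> bounded_measurable g ->
  markov_pow k (fun y => f y + g y) =
  (fun z => markov_pow k f z + markov_pow k g z).
Proof.
move=> bf bg; elim: k => //= k ->.
by apply: markov_opD; exact: bounded_measurable_markov_pow.
Qed.

Lemma markov_powZ k c f : bounded_measurable f ->
  markov_pow k (fun y => c * f y) = (fun z => c * markov_pow k f z).
Proof.
move=> bf; elim: k => //= k ->.
by apply: markov_opZ; exact: bounded_measurable_markov_pow.
Qed.

Lemma markov_powB k f g : bounded_measurable f -> bounded_measurable g ->
  markov_pow k (fun y => f y - g y) =
  (fun z => markov_pow k f z - markov_pow k g z).
Proof.
move=> bf bg; have bNg := bounded_measurableZ (-1) bg.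
have := markov_powD k bf bNg; rewrite markov_powZ//.
by under eq_fun do rewrite mulN1r; under [in RHS]eq_fun do rewrite mulN1r.
Qed.

Lemma markov_pow_sum k (I : Type) (s : seq I) (F : I -> T -> R) :
  (forall i, bounded_measurable (F i)) ->
  markov_pow k (fun y => \sum_(i <- s) F i y) =
  (fun z => \sum_(i <- s) markov_pow k (F i) z).
Proof.
move=> bF; elim: k => //= k ->.
by apply: markov_op_sum => i; exact: bounded_measurable_markov_pow.
Qed.

Lemma kernel_markov_op_indic z A : measurable A ->
  Q z A = (markov_op (\1_A) z)%:E.
Proof.
move=> mA; rewrite /markov_op -EFin_Rintegral//; last exact: bounded_measurable_indic.
by rewrite integral_indic// setIT.
Qed.

Lemma kpow_markov_pow k z A : measurable A ->
  kpow Q k z A = (markov_pow k (\1_A) z)%:E.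
Proof.
move=> mA; elim: k z => [|k IH] z /=; first by rewrite diracE /indic.
under eq_integral do rewrite IH.
rewrite EFin_Rintegral//.
exact/bounded_measurable_markov_pow/bounded_measurable_indic.
Qed.

End markov_operator.


Section markov_operator_bounds.
Context {R : realType} {dT : measure_display} {T : measurableType dT}.
Variable Q : R.-pker T ~> T.

Lemma markov_pow_oscillation_le k y y' (phi : T -> R) M r :
  bounded_measurable phi -> (forall z, `|phi z| <= M) ->
  (tv_norm (kpow Q k y) (kpow Q k y') <= r%:E)%E ->
  `|markov_pow Q k phi y - markov_pow Q k phi y'| <= M * r.
Proof.
move=> bphi hM htv; apply/ler_addgt0Pr => e e0.
have e2 : 0 < e / 2 by rewrite divr_gt0.
have [N [A [c [mA tA cA cM phi_s]]]] := step_function_approx bphi.1 hM e2.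
pose s z := \sum_(j < N) c j * \1_(A j) z.
have bind j := bounded_measurable_indic (R := R) (mA j).
have bcind j : bounded_measurable (fun z => c j * \1_(A j) z).
  exact: bounded_measurableZ.
have bs : bounded_measurable s by exact: bounded_measurable_sum.
have close : `|markov_pow Q k (fun z => phi z - s z) y -
               markov_pow Q k (fun z => phi z - s z) y'| <= e.
  apply: le_trans (ler_normB _ _) _; rewrite [e]splitr.
  by apply: lerD; apply: normr_markov_pow_le => //; exact: bounded_measurableB.
have step : `|markov_pow Q k s y - markov_pow Q k s y'| <= M * r.
  rewrite /s markov_pow_sum// -sumrB; apply: le_trans (ler_norm_sum _ _ _) _.
  apply: (@le_trans _ _ (\sum_(j < N) M *
      `|markov_pow Q k (\1_(A j)) y - markov_pow Q k (\1_(A j)) y'|)).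
    apply: ler_sum => j _; rewrite !markov_powZ// -mulrBr normrM.
    by rewrite ler_wpM2r.
  have M0 : 0 <= M by apply: le_trans (hM point).
  rewrite -mulr_sumr ler_wpM2l// -lee_fin (le_trans _ htv)// -sumEFin.
  apply: ereal_sup_ubound; exists N, A; split => //.
  by apply: eq_bigr => j _; rewrite !kpow_markov_pow// -EFinB.
rewrite markov_powB// in close.
set Pphi := markov_pow Q k phi; set Ps := markov_pow Q k s.
have -> : Pphi y - Pphi y' = (Pphi y - Ps y - (Pphi y' - Ps y')) + (Ps y - Ps y').
  by ring.
by rewrite addrC; apply: le_trans (ler_normD _ _) _; exact: lerD.
Qed.

Lemma Rintegral_markov_op (pi : probability T R) phi : kinvariant Q pi ->
  bounded_measurable phi -> \int[pi]_z markov_op Q phi z = \int[pi]_z phi z.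
Proof.
move=> inv bphi; have pi1 := probability_setT pi.
have [mphi [M hM]] := bphi.
apply/eqP; rewrite -subr_eq0 -normr_le0; apply/ler_addgt0Pr => e e0; rewrite add0r.
have e2 : 0 < e / 2 by rewrite divr_gt0.
have [N [A [c [mA tA cA cM phi_s]]]] := step_function_approx mphi hM e2.
pose s z := \sum_(j < N) c j * \1_(A j) z.
have bind j := bounded_measurable_indic (R := R) (mA j).
have bcind j : bounded_measurable (fun z => c j * \1_(A j) z).
  exact: bounded_measurableZ.
have bs : bounded_measurable s by exact: bounded_measurable_sum.
have bPs := bounded_measurable_markov_op Q bs.
have bPphi := bounded_measurable_markov_op Q bphi.
have invariant_s : \int[pi]_z markov_op Q s z = \int[pi]_z s z.
  rewrite /s markov_op_sum// !Rintegral_sum_bounded//; last first.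
    by move=> j; exact: bounded_measurable_markov_op.
  apply: eq_bigr => j _; rewrite markov_opZ// !RintegralZl_bounded//; last first.
    exact: bounded_measurable_markov_op.
  congr (_ * _); rewrite Rintegral_indic//.
  transitivity (fine (\int[pi]_z Q z (A j))%E); last by rewrite inv.
  by congr fine; apply: eq_integral => z _; rewrite kernel_markov_op_indic.
have closeP : `|\int[pi]_z (markov_op Q phi z - markov_op Q s z)| <= e / 2.
  rewrite -(markov_powB Q 1 bphi bs); apply: normr_Rintegral_le => //.
    exact/bounded_measurable_markov_op/bounded_measurableB.
  by apply: normr_markov_op_le => //; exact: bounded_measurableB.
have close : `|\int[pi]_z (phi z - s z)| <= e / 2.
  by apply: normr_Rintegral_le => //; exact: bounded_measurableB.
rewrite RintegralB_bounded// invariant_s in closeP.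
rewrite RintegralB_bounded// in close.
set Pphi := \int[pi]_z markov_op Q phi z; set Is := \int[pi]_z s z.
have -> : Pphi - \int[pi]_z phi z = (Pphi - Is) - (\int[pi]_z phi z - Is) by ring.
by rewrite [e]splitr; apply: le_trans (ler_normB _ _) _; exact: lerD.
Qed.

Lemma Rintegral_markov_pow (pi : probability T R) k phi : kinvariant Q pi ->
  bounded_measurable phi -> \int[pi]_z markov_pow Q k phi z = \int[pi]_z phi z.
Proof.
move=> inv bphi; elim: k => //= k IH.
by rewrite Rintegral_markov_op//; exact: bounded_measurable_markov_pow.
Qed.

End markov_operator_bounds.

Section elementary_inequalities.
Context {R : realType}.

Lemma sum_pow_divn (r : R) (t N : nat) : (0 < t)%N -> r != 1 ->
  \sum_(0 <= i < N) r ^+ (i %/ t) =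
  t%:R * (1 - r ^+ (N %/ t)) / (1 - r) + (N %% t)%:R * r ^+ (N %/ t).
Proof.
move=> t0 r1; have r1' : 1 - r != 0 by rewrite subr_eq0 eq_sym.
elim: N => [|N IH].
  by rewrite big_geq// div0n mod0n expr0 subrr mulr0 !mul0r addr0.
rewrite big_nat_recr//= IH divnS// modnS.
have [tN1|_] /= := boolP (t %| N.+1)%N; last by rewrite add0n -natr1; field.
have last_in_block : (N %% t).+1 = t.
  apply/eqP; rewrite eqn_leq ltn_pmod//=.
  have : ((N %% t).+1 %% t = 0)%N by rewrite -addn1 modnDml addn1; exact/eqP.
  by apply: contra_eqT; rewrite -ltnNge => lt; rewrite modn_small.
have tE : (t%:R : R) = (N %% t)%:R + 1 by rewrite natr1 last_in_block.
by rewrite add1n exprS tE; field.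
Qed.

Lemma sum_quarter_pow_divn_le (t N : nat) : (0 < t)%N ->
  \sum_(0 <= i < N) ((4%:R : R)^-1) ^+ (i %/ t) <= 4 * t%:R / 3.
Proof.
move=> t0; rewrite sum_pow_divn//; last by rewrite invr_eq1 pnatr_eq1.
have q0 : 0 <= ((4%:R : R)^-1) ^+ (N %/ t) by rewrite exprn_ge0// invr_ge0.
have : ((N %% t)%:R : R) <= t%:R by rewrite ler_nat ltnW// ltn_pmod.
have -> : 1 - (4%:R : R)^-1 = 3 / 4 by field.
move: q0; set q := _ ^+ _; set b := (N %% t)%:R; set c := t%:R.
have c0 : 0 <= c by [].
by nra.
Qed.

Lemma weighted_amgm (l u v : R) : 0 < l -> 2 * (u * v) <= l * u ^+ 2 + v ^+ 2 / l.
Proof.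
move=> l0; rewrite -subr_ge0.
have -> : l * u ^+ 2 + v ^+ 2 / l - 2 * (u * v) = (l * u - v) ^+ 2 / l.
  by field; rewrite gt_eqF.
by rewrite divr_ge0 ?sqr_ge0 ?ltW.
Qed.

Lemma weighted_amgm_dot d (l : R) (u v : 'I_d -> R) : 0 < l ->
  2 * `|\sum_j u j * v j| <= l * \sum_j u j ^+ 2 + (\sum_j v j ^+ 2) / l.
Proof.
move=> l0.
have amgm_sum (w : 'I_d -> R) :
    2 * \sum_j u j * w j <= l * \sum_j u j ^+ 2 + (\sum_j w j ^+ 2) / l.
  rewrite !mulr_sumr mulr_suml -big_split; apply: ler_sum => j _.
  exact: weighted_amgm.
have [uv0|uv0] := lerP 0 (\sum_j u j * v j); first by rewrite ger0_norm// amgm_sum.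
rewrite ltr0_norm// -sumrN.
under eq_bigr do rewrite -mulrN.
have -> : \sum_j v j ^+ 2 = \sum_j (- v j) ^+ 2 by apply: eq_bigr => j _; rewrite sqrrN.
exact: amgm_sum.
Qed.

End elementary_inequalities.

Definition mixing_rate {R : realType} (tau k : nat) : R := (4%:R^-1) ^+ (k %/ tau).

Lemma mixing_rate_gt0 {R : realType} tau k : 0 < mixing_rate tau k :> R.
Proof. by rewrite exprn_gt0// invr_gt0 ltr0n. Qed.

Definition geometric_mixing {R : realType} {dT : measure_display}
    {T : measurableType dT} (Q : R.-pker T ~> T) (tau : nat) :=
  forall k z z', ((2^-1)%:E * tv_norm (kpow Q k z) (kpow Q k z') <=
                  (mixing_rate tau k)%:E)%E.

Section uniform_mixing.
Context {R : realType} {dT : measure_display} {T : measurableType dT}.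
Variables (Q : R.-pker T ~> T) (pi : probability T R) (tau : nat).
Hypothesis inv : kinvariant Q pi.
Hypothesis mix : geometric_mixing Q tau.

Lemma markov_pow_centered_sqr_le d (H : 'I_d -> T -> R) (B : R) k y :
  (forall j, bounded_measurable (H j)) -> (forall j, \int[pi]_z H j z = 0) ->
  (forall z, \sum_j H j z ^+ 2 <= B) ->
  \sum_j markov_pow Q k (H j) y ^+ 2 <= 4 * mixing_rate tau k ^+ 2 * B.
Proof.
move=> bH H0 HB; have pi1 := probability_setT pi.
have q0 := mixing_rate_gt0 (R := R) tau k; set q := mixing_rate tau k in q0 *.
pose v j := markov_pow Q k (H j) y; pose S := \sum_j v j ^+ 2.
change (S <= 4 * q ^+ 2 * B).
pose phi z := \sum_j v j * H j z.
have bvH j : bounded_measurable (fun z => v j * H j z) by exact: bounded_measurableZ.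
have bphi : bounded_measurable phi by exact: bounded_measurable_sum.
have bPphi := bounded_measurable_markov_pow Q k bphi.
have Pphi_y : markov_pow Q k phi y = S.
  rewrite markov_pow_sum//; apply: eq_bigr => j _.
  by rewrite markov_powZ// expr2.
have Pphi_centered : \int[pi]_z markov_pow Q k phi z = 0.
  rewrite Rintegral_markov_pow// /phi Rintegral_sum_bounded// big1// => j _.
  by rewrite RintegralZl_bounded// H0 mulr0.
pose M := ((2 * q)^-1 * S + 2 * q * B) / 2.
have phiM z : `|phi z| <= M.
  have := weighted_amgm_dot v (fun j => H j z) (_ : 0 < (2 * q)^-1).
  rewrite invrK invr_gt0 mulr_gt0// => /(_ isT) amgm.
  have : (\sum_j H j z ^+ 2) * (2 * q) <= B * (2 * q).
    by apply: ler_wpM2r; [rewrite mulr_ge0// ltW | exact: HB].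
  by move: amgm; rewrite -/S -/(phi z) /M; lra.
have osc z : `|S - markov_pow Q k phi z| <= M * (2 * q).
  rewrite -Pphi_y; apply: markov_pow_oscillation_le => //.
  by rewrite EFinM -lee_pdivrMl.
have : S <= M * (2 * q).
  have -> : S = \int[pi]_z (S - markov_pow Q k phi z).
    by rewrite RintegralB_bounded ?Pphi_centered ?Rintegral_cst1 ?subr0//;
      exact: bounded_measurable_cst.
  apply: le_trans (ler_norm _) _; apply: normr_Rintegral_le => //.
  exact/bounded_measurableB/bPphi/bounded_measurable_cst.
have -> : M * (2 * q) = S / 2 + 2 * q ^+ 2 * B by rewrite /M; field; rewrite gt_eqF.
lra.
Qed.

End uniform_mixing.

Section chain_mean_sqnorm.
Context {R : realType} {dT : measure_display} {T : measurableType dT}.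
Variables (Q : R.-pker T ~> T) (pi : probability T R) (tau : nat).
Hypothesis inv : kinvariant Q pi.
Hypothesis tau0 : (0 < tau)%N.
Hypothesis mix : geometric_mixing Q tau.
Variables (d : nat) (H : 'I_d -> T -> R) (B : R).
Hypothesis bH : forall j, bounded_measurable (H j).
Hypothesis H0 : forall j, \int[pi]_z H j z = 0.
Hypothesis HB : forall z, \sum_j H j z ^+ 2 <= B.

Let Q1 z : Q z setT = 1%E. Proof. exact: prob_kernel. Qed.

Definition expected_increment m j y := \sum_(1 <= i < m.+1) markov_pow Q i (H j) y.

Lemma bounded_measurable_expected_increment m j :
  bounded_measurable (expected_increment m j).
Proof. by apply: bounded_measurable_sum => i; exact: bounded_measurable_markov_pow. Qed.

Lemma expected_incrementS m j :
  markov_op Q (fun y => H j y + expected_increment m j y) =1 expected_increment m.+1 j.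
Proof.
move=> z; rewrite markov_opD//; last exact: bounded_measurable_expected_increment.
rewrite /expected_increment [in RHS]big_nat_recl// markov_op_sum//.
by move=> i; exact: bounded_measurable_markov_pow.
Qed.

Lemma variance_step_le m y :
  \sum_j H j y ^+ 2 + 2 * \sum_j H j y * expected_increment m j y <= 8 * tau%:R * B.
Proof.
have B0 : 0 <= B by apply: le_trans (HB y); rewrite sumr_ge0// => j _; exact: sqr_ge0.
have cross i : 2 * \sum_j H j y * markov_pow Q i (H j) y <= 4 * mixing_rate tau i * B.
  have q0 := mixing_rate_gt0 (R := R) tau i; set q := mixing_rate tau i in q0 *.
  have q2 : 0 < 2 * q by exact: mulr_gt0.
  have := weighted_amgm_dot (fun j => H j y) (fun j => markov_pow Q i (H j) y) q2.
  have : (\sum_j markov_pow Q i (H j) y ^+ 2) / (2 * q) <= 2 * q * B.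
    rewrite ler_pdivrMr// (_ : 2 * q * B * (2 * q) = 4 * q ^+ 2 * B); last by ring.
    exact: (markov_pow_centered_sqr_le inv mix i y bH H0 HB).
  have : 2 * q * \sum_j H j y ^+ 2 <= 2 * q * B by rewrite ler_pM2l.
  have := ler_norm (\sum_j H j y * markov_pow Q i (H j) y); lra.
have rates : 1 + 4 * \sum_(1 <= i < m.+1) mixing_rate tau i <= 8 * tau%:R :> R.
  have := @sum_quarter_pow_divn_le R tau m.+1 tau0; rewrite big_ltn//= div0n expr0.
  have : 1 <= tau%:R :> R by rewrite ler1n.
  by rewrite /mixing_rate; lra.
have -> : 2 * \sum_j H j y * expected_increment m j y =
    \sum_(1 <= i < m.+1) 2 * \sum_j H j y * markov_pow Q i (H j) y.
  rewrite -mulr_sumr exchange_big /=; congr (2 * _); apply: eq_bigr => j _.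
  by rewrite /expected_increment mulr_sumr.
apply: le_trans (lerD (HB y) (ler_sum _ (fun i _ => cross i))) _.
rewrite -mulr_suml -mulr_sumr; nra.
Qed.

Variable n : nat.
Hypothesis n_gt0 : (0 < n)%N.

Definition mean_sqnorm (p : nat -> T) : R :=
  (n%:R ^+ 2)^-1 * \sum_j (\sum_(1 <= i < n.+1) H j (p i)) ^+ 2.

(* [potential m s y] dominates n^-2 E_y |s + H(Z_1) + ... + H(Z_m)|^2: the
   cross terms E_y <s, H(Z_i)> add up to <s, expected_increment m y>, and
   each step adds at most 8 tau B to the rest (lemma [variance_step_le]). *)
Definition quad_potential m (e s : 'I_d -> R) : R := (n%:R ^+ 2)^-1 *
  (\sum_j s j ^+ 2 + 2 * \sum_j s j * e j + m%:R * (8 * tau%:R * B)).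

Definition potential m s y := quad_potential m (expected_increment m ^~ y) s.

Lemma potential0 s y : potential 0 s y = (n%:R ^+ 2)^-1 * \sum_j s j ^+ 2.
Proof.
rewrite /potential /quad_potential mul0r addr0 [X in 2 * X]big1 ?mulr0 ?addr0//.
by move=> j _; rewrite /expected_increment big_geq// mulr0.
Qed.

Lemma quad_potential_shift m (e h s : 'I_d -> R) :
  \sum_j h j ^+ 2 + 2 * \sum_j h j * e j <= 8 * tau%:R * B ->
  quad_potential m e (fun j => s j + h j) <=
  quad_potential m.+1 (fun j => h j + e j) s.
Proof.
move=> step; rewrite /quad_potential ler_wpM2l ?invr_ge0// -[m.+1%:R]natr1.
have -> : \sum_j (s j + h j) ^+ 2 =
    \sum_j s j ^+ 2 + 2 * \sum_j s j * h j + \sum_j h j ^+ 2.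
  by rewrite mulr_sumr -!big_split; apply: eq_bigr => j _ /=; ring.
have -> : \sum_j (s j + h j) * e j = \sum_j s j * e j + \sum_j h j * e j.
  by rewrite -big_split; apply: eq_bigr => j _ /=; ring.
have -> : \sum_j s j * (h j + e j) = \sum_j s j * h j + \sum_j s j * e j.
  by rewrite -big_split; apply: eq_bigr => j _ /=; ring.
by lra.
Qed.

Lemma bounded_measurable_quad_potential m (e : 'I_d -> T -> R) s :
  (forall j, bounded_measurable (e j)) ->
  bounded_measurable (fun y => quad_potential m (e ^~ y) s).
Proof.
move=> be; have bc c := bounded_measurable_cst (T := T) c.
apply/bounded_measurableZ/bounded_measurableD; last exact: bc.
apply: bounded_measurableD; first exact: bc.
by apply/bounded_measurableZ/bounded_measurable_sum => j; exact: bounded_measurableZ.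
Qed.

Lemma Rintegral_quad_potential (mu : {measure set T -> \bar R}) m
    (e : 'I_d -> T -> R) s : mu setT = 1%E -> (forall j, bounded_measurable (e j)) ->
  \int[mu]_y quad_potential m (e ^~ y) s =
  quad_potential m (fun j => \int[mu]_y e j y) s.
Proof.
move=> mu1 be; have bc c := bounded_measurable_cst (T := T) c.
have bse j : bounded_measurable (fun y => s j * e j y) by exact: bounded_measurableZ.
have bsum : bounded_measurable (fun y => \sum_j s j * e j y).
  exact: bounded_measurable_sum.
have b2sum := bounded_measurableZ 2 bsum.
have binner : bounded_measurable (fun y => \sum_j s j ^+ 2 + 2 * \sum_j s j * e j y).
  exact: bounded_measurableD.
rewrite /quad_potential RintegralZl_bounded//; last exact: bounded_measurableD.
rewrite !RintegralD_bounded// !Rintegral_cst1// RintegralZl_bounded//.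
rewrite Rintegral_sum_bounded//.
by congr (_ * (_ + 2 * _ + _)); apply: eq_bigr => j _; exact: RintegralZl_bounded.
Qed.

Lemma integral_le_potentialS m (s : 'I_d -> R) z (h : T -> \bar R) :
  (forall y, 0 <= h y)%E ->
  (forall y, h y <= (potential m (fun j => s j + H j y) y)%:E)%E ->
  (\int[Q z]_y h y <= (potential m.+1 s z)%:E)%E.
Proof.
move=> h0 h_le.
have bHE j : bounded_measurable (fun y => H j y + expected_increment m j y).
  exact/bounded_measurableD/bounded_measurable_expected_increment.
pose psi y := quad_potential m.+1 (fun j => H j y + expected_increment m j y) s.
apply: (@le_trans _ _ (\int[Q z]_y (psi y)%:E)%E).
  apply: ge0_le_integralT => // y; rewrite (le_trans (h_le y))// lee_fin.
  exact/quad_potential_shift/variance_step_le.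
rewrite EFin_Rintegral//; last exact: bounded_measurable_quad_potential.
rewrite lee_fin (Rintegral_quad_potential _ _ (Q1 z) bHE) /potential.
by rewrite (_ : (fun j => _) = expected_increment m.+1 ^~ z)//; apply/funext => j;
  exact: expected_incrementS.
Qed.

Lemma mexp_mean_sqnorm_ge0 m p k z : (0 <= mexp Q m (EFin \o mean_sqnorm) p k z)%E.
Proof.
elim: m p k z => [|m IH] p k z /=; last by apply: integral_ge0 => y _; exact: IH.
rewrite lee_fin mulr_ge0 ?invr_ge0// sumr_ge0// => j _; exact: sqr_ge0.
Qed.

Definition running_sum (p : nat -> T) k z j :=
  \sum_(1 <= i < k.+1) H j (if i == k then z else p i).

Lemma running_sumS p k z y j :
  running_sum (fun l => if l == k then z else p l) k.+1 y j =
  running_sum p k z j + H j y.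
Proof.
rewrite /running_sum big_nat_recr//= eqxx; congr (_ + _).
by apply: eq_big_nat => i /andP[_ ik]; rewrite (ltn_eqF ik).
Qed.

Lemma mexp_le_potential m k p z : (k + m)%N = n ->
  (mexp Q m (EFin \o mean_sqnorm) p k z <= (potential m (running_sum p k z) z)%:E)%E.
Proof.
elim: m k p z => [|m IH] k p z; rewrite ?addn0 => kmn.
  by rewrite /= potential0 /mean_sqnorm lee_fin -kmn.
apply: integral_le_potentialS => y; first exact: mexp_mean_sqnorm_ge0.
rewrite (_ : (fun j => _) = running_sum (fun l => if l == k then z else p l) k.+1 y).
  by apply: IH; rewrite addSnnS.
by apply/funext => j; rewrite running_sumS.
Qed.

Lemma chain_expect_mean_sqnorm_le (xi : probability T R) :
  (chain_expect Q xi n (EFin \o mean_sqnorm) <= (8 * tau%:R / n%:R * B)%:E)%E.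
Proof.
apply: (@le_trans _ _ (\int[xi]_z (potential n (running_sum (fun=> z) 0 z) z)%:E)%E).
  apply: ge0_le_integralT => z; first exact: mexp_mean_sqnorm_ge0.
  exact: mexp_le_potential.
have potential_start z :
    potential n (running_sum (fun=> z) 0 z) z = 8 * tau%:R / n%:R * B.
  rewrite /potential /quad_potential (_ : running_sum _ 0 z = fun=> 0); last first.
    by apply/funext => j; rewrite /running_sum big_geq.
  rewrite big1 => [|j _]; last by rewrite expr0n.
  rewrite big1 => [|j _]; last by rewrite mul0r.
  by rewrite mulr0 !add0r; field; rewrite pnatr_eq0 -lt0n.
have xi1 : (xi : {measure set T -> \bar R}) setT = 1%E := probability_setT xi.
by under eq_integral do rewrite potential_start; rewrite integral_cst// xi1 mule1.
Qed.

End chain_mean_sqnorm.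

Section sqnorm_mean.
Context {R : realType} {d : nat}.

Lemma sqnorm_mean_sub n (v : nat -> 'rV[R]_d) (w : 'rV[R]_d) : (0 < n)%N ->
  sqnorm (n%:R^-1 *: (\sum_(1 <= i < n.+1) v i) - w) =
  (n%:R ^+ 2)^-1 * \sum_j (\sum_(1 <= i < n.+1) (v i 0 j - w 0 j)) ^+ 2.
Proof.
move=> n0; rewrite /sqnorm mulr_sumr; apply: eq_bigr => j _.
rewrite !mxE summxE sumrB sumr_const_nat subn1 /= -mulr_natr.
by field; rewrite pnatr_eq0 -lt0n.
Qed.

End sqnorm_mean.

Theorem lemma1 (R : realType) (dT : measure_display) (T : measurableType dT)
  (dist : T -> T -> R) (Q : R.-pker T ~> T) (pi : probability T R) (tau : nat)
  (d : nat) (F : 'rV[R]_d -> T -> R) (sigma delta : R) :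
  polish_borel dist ->
  kinvariant Q pi ->
  (forall nu : probability T R, kinvariant Q nu ->
     forall A, measurable A -> nu A = pi A) ->
  (0 < tau)%N ->
  (forall (k : nat) (z z' : T),
     ((2%:R^-1)%:E * tv_norm (kpow Q k z) (kpow Q k z') <=
       ((4%:R^-1) ^+ (k %/ tau))%:E)%E) ->
  0 <= sigma -> 0 <= delta ->
  (forall x, measurable_fun setT (F x)) ->
  (forall x, pi.-integrable setT (fun z => (F x z)%:E)) ->
  (forall z x, differentiable (fun y => F y z) x) ->
  let f := fun x => fine (\int[pi]_z (F x z)%:E)%E in
  let gradF := fun x z => grad (fun y => F y z) x in
  (forall x, differentiable f x) ->
  (forall x (i : 'I_d), measurable_fun setT (fun z => gradF x z 0 i)) ->
  (forall x (i : 'I_d), (\int[pi]_z (gradF x z 0 i)%:E)%E = (grad f x 0 i)%:E) ->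
  (forall z x, sqnorm (gradF x z - grad f x)
                 <= sigma ^+ 2 + delta ^+ 2 * sqnorm (grad f x)) ->
  forall (n : nat) (x : 'rV[R]_d), (1 <= n)%N ->
    let g := fun p : nat -> T =>
      (sqnorm (n%:R^-1 *: (\sum_(1 <= i < n.+1) gradF x (p i)) - grad f x))%:E in
    (chain_expect Q pi n g
       <= ((8 * tau%:R / n%:R) * (sigma ^+ 2 + delta ^+ 2 * sqnorm (grad f x)))%:E)%E
    /\
    (forall xi : probability T R,
       chain_expect Q xi n g
       <= ((16 * (1 + (ln 4 ^+ 2)^-1) * tau%:R / n%:R)
             * (sigma ^+ 2 + delta ^+ 2 * sqnorm (grad f x)))%:E)%E.
Proof.
move=> _ inv _ tau0 mix _ _ _ _ _ f gradF _ mG iG noise n x n0 g.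
set B := sigma ^+ 2 + _.
pose H j z := gradF x z 0 j - grad f x 0 j.
have HB z : \sum_j H j z ^+ 2 <= B.
  have -> : \sum_j H j z ^+ 2 = sqnorm (gradF x z - grad f x).
    by rewrite /sqnorm; apply: eq_bigr => j _; rewrite /H !mxE.
  exact: (noise z x).
have bH j : bounded_measurable (H j).
  apply: bounded_measurable_sqr_le (measurable_funB (mG x j) (measurable_cst _)) _.
  move=> z; apply: le_trans (HB z); rewrite (bigD1 j)//= lerDl.
  by apply: sumr_ge0 => i _; exact: sqr_ge0.
have H0 j : \int[pi]_z H j z = 0.
  by apply: Rintegral_centered (iG x j); [exact: probability_setT | exact: bH].
have g_mean : g = EFin \o mean_sqnorm H n.
  by apply/funext => p; rewrite /g sqnorm_mean_sub.
have C1 : 8 <= 16 * (1 + (ln 4 ^+ 2)^-1) :> R.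
  have : 0 <= (ln 4 ^+ 2 : R)^-1 by rewrite invr_ge0 sqr_ge0.
  lra.
have bound xi := chain_expect_mean_sqnorm_le inv tau0 mix bH H0 HB n0 xi.
rewrite g_mean; split => [|xi]; first exact: bound.
have B0 : 0 <= B.
  by apply: le_trans (HB point); rewrite sumr_ge0// => j _; exact: sqr_ge0.
apply: le_trans (bound xi) _.
by rewrite lee_fin ler_wpM2r// ler_wpM2r ?invr_ge0// ler_wpM2r.
Qed.
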